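(* Let $X\subseteq\Omega$ be club in $\Omega$ with $0\notin X$, and $n<\omega$. If $\xi\in X$ and $\xi<\Theta_X(\Omega_n)$, then there is $\zeta<\Omega_n$ such that $\xi=\Theta_X(\zeta)$.
   Context: $\Omega$ is the first uncountable ordinal; $\varepsilon_{\Omega+1}$ the least $\varepsilon>\Omega$ with $\omega^\varepsilon=\varepsilon$. $\Omega_0=1$, $\Omega_{n+1}=\Omega^{\Omega_n}$. Every $0<\xi<\varepsilon_{\Omega+1}$ has a unique $\Omega$-normal form $\xi=\Omega^{\alpha}\beta+\gamma$ with $0<\beta<\Omega$, $\gamma<\Omega^{\alpha}$; $C(0)=\{0\}$, $C(\Omega^\alpha\beta+\gamma)=C(\alpha)\cup C(\gamma)\cup\{\beta\}$; $\xi^*=\max C(\xi)$. $\Theta_X(\xi)$ is defined by recursion on $\xi<\varepsilon_{\Omega+1}$ as the least $\theta\in X$ with $\theta>\xi^*$ such that every $\zeta<\xi$ with $\zeta^*<\theta$ satisfies $\Theta_X(\zeta)<\theta$. *)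

(* Model:
   - Omega (the first uncountable ordinal) is an abstract type W with a strict
     order lt that is a well-order, uncountable, and all of whose proper
     initial segments are countable (this characterises omega_1 up to iso).
   - Ordinals below eps_{Omega+1} are represented by their Omega-normal forms
     xi = Omega^a * b + c, as terms of the inductive type ON W. *)
From Stdlib Require Import ClassicalEpsilon.

Set Implicit Arguments.

Section Defs.
Variable W : Type.
Variable lt : W -> W -> Prop.

Definition countableW (A : W -> Prop) : Prop :=
  exists f : W -> nat, forall x y, A x -> A y -> f x = f y -> x = y.

Definition is_first_uncountable : Prop :=
  (forall x, ~ lt x x) /\
  (forall x y z, lt x y -> lt y z -> lt x z) /\
  (forall x y, lt x y \/ x = y \/ lt y x) /\
  well_founded lt /\
  ~ countableW (fun _ => True) /\
  (forall w, countableW (fun v => lt v w)).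

Definition is_zeroW (z0 : W) : Prop := forall w, ~ lt w z0.
Definition is_oneW (z0 o1 : W) : Prop :=
  lt z0 o1 /\ forall w, lt z0 w -> w = o1 \/ lt o1 w.

Definition unboundedW (X : W -> Prop) : Prop :=
  forall a, exists x, X x /\ lt a x.
Definition closedW (X : W -> Prop) : Prop :=
  forall l, (exists a, lt a l) ->
    (forall a, lt a l -> exists x, X x /\ lt a x /\ lt x l) -> X l.
Definition clubW (X : W -> Prop) : Prop := closedW X /\ unboundedW X.

(* Omega-normal forms: ONZ = 0, ONP a b c = Omega^a * b + c *)
Inductive ON : Type :=
| ONZ : ON
| ONP : ON -> W -> ON -> ON.

Fixpoint onlt (x y : ON) : Prop :=
  match x, y with
  | ONZ, ONZ => False
  | ONZ, ONP _ _ _ => True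
  | ONP _ _ _, ONZ => False
  | ONP a b c, ONP a' b' c' =>
      onlt a a' \/ (a = a' /\ (lt b b' \/ (b = b' /\ onlt c c')))
  end.

(* well-formed normal forms: 0 < b < Omega and c < Omega^a *)
Fixpoint onvalid (z0 : W) (x : ON) : Prop :=
  match x with
  | ONZ => True
  | ONP a b c =>
      onvalid z0 a /\ lt z0 b /\ onvalid z0 c /\
      match c with
      | ONZ => True
      | ONP a' _ _ => onlt a' a
      end
  end.

Definition maxW (a b : W) : W :=
  if excluded_middle_informative (lt a b) then b else a.

(* xi^* = max C(xi), with C(0) = {0}, C(Omega^a b + c) = C(a) u C(c) u {b} *)
Fixpoint star (z0 : W) (x : ON) : W :=
  match x with
  | ONZ => z0
  | ONP a b c => maxW (maxW (star z0 a) (star z0 c)) b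
  end.

Fixpoint Omega_n (o1 : W) (n : nat) : ON :=
  match n with
  | O => ONP ONZ o1 ONZ
  | S k => ONP (Omega_n o1 k) o1 ONZ
  end.

Definition leastW (P : W -> Prop) (x : W) : Prop :=
  P x /\ forall y, P y -> ~ lt y x.

(* Th satisfies the recursive definition of Theta_X on all xi < eps_{Omega+1}:
   Th xi is the least theta in X with theta > xi^* such that every zeta < xi
   with zeta^* < theta satisfies Th zeta < theta. *)
Definition Theta_spec (z0 : W) (X : W -> Prop) (Th : ON -> W) : Prop :=
  forall xi, onvalid z0 xi ->
    leastW (fun th => X th /\ lt (star z0 xi) th /\
              forall zeta, onvalid z0 zeta -> onlt zeta xi ->
                lt (star z0 zeta) th -> lt (Th zeta) th)
           (Th xi).
End Defs.

From Stdlib Require Import ClassicalEpsilon Classical.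

Set Implicit Arguments.

(* Call zeta < Omega_n escaping if zeta^* < xi but Theta_X(zeta) >= xi.  If no
   zeta escaped, xi would be a candidate in the definition of Theta_X(Omega_n)
   (using Omega_n^* = 1 < xi), contradicting xi < Theta_X(Omega_n).  Valid
   normal forms are well ordered, so there is a least escaping zeta; nothing
   below it escapes, so xi is a candidate for Theta_X(zeta), which gives
   Theta_X(zeta) <= xi and hence equality.  The remaining case xi = 1 is
   settled by Theta_X(0) = 1. *)

Lemma Acc_minimal (A : Type) (R : A -> A -> Prop) (P : A -> Prop) (x : A) :
  Acc R x -> P x -> exists m, P m /\ forall y, R y m -> ~ P y.
Proof.
  induction 1 as [x _ IH]; intros Px.
  destruct (classic (exists y, R y x /\ P y)) as [[y [Ryx Py]] | Hnone].
  - exact (IH y Ryx Py).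
  - exists x; split; [exact Px |].
    intros y Ryx Py; apply Hnone; exists y; auto.
Qed.

Section NormalForms.
Variables (W : Type) (lt : W -> W -> Prop) (z0 : W).
Hypothesis lt_trans : forall x y z, lt x y -> lt y z -> lt x z.
Hypothesis lt_wf : well_founded lt.

Lemma onlt_trans (x y z : ON W) : onlt lt x y -> onlt lt y z -> onlt lt x z.
Proof.
  revert y z.
  induction x as [|a IHa b c IHc]; intros [|a' b' c'] [|a'' b'' c''] Hxy Hyz;
    simpl in *; try tauto.
  destruct Hxy as [Ha | [<- Hxy]]; destruct Hyz as [Ha' | [<- Hyz]].
  - left; eauto.
  - left; exact Ha.
  - left; exact Ha'.
  - right; split; [reflexivity |].
    destruct Hxy as [Hb | [<- Hc]]; destruct Hyz as [Hb' | [<- Hc']]; eauto.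
Qed.

(* [lt_Omega_pow x a] says x < Omega^a; it is the last clause of [onvalid]. *)
Definition lt_Omega_pow (x a : ON W) : Prop :=
  match x with ONZ _ => True | ONP a' _ _ => onlt lt a' a end.

Definition onlt_valid (y x : ON W) : Prop := onvalid lt z0 y /\ onlt lt y x.

Lemma Acc_ONZ : Acc onlt_valid (ONZ W).
Proof. constructor; intros [|? ? ?] [_ []]. Qed.

Lemma Acc_ONP (a : ON W) :
  (forall x, onvalid lt z0 x -> lt_Omega_pow x a -> Acc onlt_valid x) ->
  forall b c, onvalid lt z0 c -> lt_Omega_pow c a -> Acc onlt_valid (ONP a b c).
Proof.
  intros Hbelow b.
  induction b as [b IHb] using (well_founded_induction lt_wf).
  intros c Hc Hca.
  assert (Hacc : Acc onlt_valid c) by (apply Hbelow; assumption).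
  revert Hc Hca; induction Hacc as [c _ IHc]; intros Hc Hca.
  constructor; intros [|a' b' c'] [Hv Hlt].
  - apply Hbelow; [exact Hv | exact I].
  - destruct Hlt as [Ha' | [-> [Hb' | [-> Hc']]]].
    + apply Hbelow; [exact Hv | exact Ha'].
    + destruct Hv as (_ & _ & Hvc' & Hc'a); apply IHb; assumption.
    + destruct Hv as (_ & _ & Hvc' & Hc'a); apply IHc; [split |..]; assumption.
Qed.

Lemma Acc_lt_Omega_pow (a : ON W) :
  Acc onlt_valid a ->
  forall x, onvalid lt z0 x -> lt_Omega_pow x a -> Acc onlt_valid x.
Proof.
  induction 1 as [a _ IH]; intros [|a' b c] Hv Hxa.
  - exact Acc_ONZ.
  - destruct Hv as (Ha' & _ & Hc & Hca).
    apply Acc_ONP; [apply IH; split |..]; assumption.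
Qed.

Lemma onvalid_Acc (x : ON W) : onvalid lt z0 x -> Acc onlt_valid x.
Proof.
  induction x as [|a IHa b c _]; intros Hv.
  - exact Acc_ONZ.
  - destruct Hv as (Ha & _ & Hc & Hca).
    apply Acc_ONP; [apply Acc_lt_Omega_pow, IHa |..]; assumption.
Qed.

Lemma onlt_minimal (P : ON W -> Prop) (x : ON W) :
  onvalid lt z0 x -> P x ->
  exists m, onvalid lt z0 m /\ P m /\
    forall y, onvalid lt z0 y -> onlt lt y m -> ~ P y.
Proof.
  intros Hx Px.
  destruct (Acc_minimal (fun y => onvalid lt z0 y /\ P y) (onvalid_Acc x Hx) (conj Hx Px))
    as [m [[Hm Pm] Hmin]].
  exists m; repeat split; try assumption.
  intros y Hy Hym Py; exact (Hmin y (conj Hy Hym) (conj Hy Py)).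
Qed.

End NormalForms.

Section OmegaTower.
Variables (W : Type) (lt : W -> W -> Prop) (z0 o1 : W).
Hypothesis Hz0 : is_zeroW lt z0.
Hypothesis Hz0o1 : lt z0 o1.

Lemma maxW_idem (a : W) : maxW lt a a = a.
Proof. unfold maxW; destruct excluded_middle_informative; reflexivity. Qed.

Lemma maxW_of_lt (a b : W) : lt a b -> maxW lt a b = b.
Proof. unfold maxW; destruct excluded_middle_informative; tauto. Qed.

Lemma maxW_of_nlt (a b : W) : ~ lt a b -> maxW lt a b = a.
Proof. unfold maxW; destruct excluded_middle_informative; tauto. Qed.

Lemma onvalid_Omega_n (n : nat) : onvalid lt z0 (Omega_n o1 n).
Proof. induction n; simpl; repeat split; assumption. Qed.

Lemma star_Omega_n (n : nat) : star lt z0 (Omega_n o1 n) = o1.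
Proof.
  induction n as [|n IH]; simpl.
  - rewrite maxW_idem; exact (maxW_of_lt Hz0o1).
  - rewrite IH, (maxW_of_nlt (@Hz0 o1)); apply maxW_idem.
Qed.

Lemma ONZ_lt_Omega_n (n : nat) : onlt lt (ONZ W) (Omega_n o1 n).
Proof. destruct n; exact I. Qed.

End OmegaTower.

Section Theta.
Variables (W : Type) (lt : W -> W -> Prop) (z0 : W) (X : W -> Prop) (Th : ON W -> W).
Hypothesis HTh : Theta_spec lt z0 X Th.

Lemma Theta_least (nu : ON W) (th : W) :
  onvalid lt z0 nu -> X th -> lt (star lt z0 nu) th ->
  (forall zeta, onvalid lt z0 zeta -> onlt lt zeta nu ->
     lt (star lt z0 zeta) th -> lt (Th zeta) th) ->
  ~ lt th (Th nu).
Proof. intros Hnu HX Hstar Hclosed; apply (proj2 (HTh nu Hnu)); auto. Qed.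

Lemma Theta_ONZ (o1 : W) : is_oneW lt z0 o1 -> X o1 -> Th (ONZ W) = o1.
Proof.
  intros [Hz0o1 Hsucc] HXo1.
  destruct (proj1 (HTh (ONZ W) I)) as (_ & Hpos & _).
  destruct (Hsucc _ Hpos) as [-> | Hlt]; [reflexivity |].
  exfalso; refine (Theta_least (nu := ONZ W) I HXo1 Hz0o1 _ Hlt).
  intros [|? ? ?] _ [].
Qed.

Hypothesis lt_trans : forall x y z, lt x y -> lt y z -> lt x z.
Hypothesis lt_total : forall x y, lt x y \/ x = y \/ lt y x.
Hypothesis lt_wf : well_founded lt.

Lemma Theta_surj_below (nu : ON W) (xi : W) :
  onvalid lt z0 nu -> X xi -> lt (star lt z0 nu) xi -> lt xi (Th nu) ->
  exists zeta, onvalid lt z0 zeta /\ onlt lt zeta nu /\ xi = Th zeta.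
Proof.
  intros Hnu HXxi Hstar Hxi.
  set (escapes := fun zeta =>
         onlt lt zeta nu /\ lt (star lt z0 zeta) xi /\ ~ lt (Th zeta) xi).
  assert (Hex : exists zeta, onvalid lt z0 zeta /\ escapes zeta).
  { apply NNPP; intros Hnone.
    apply (Theta_least Hnu HXxi Hstar); [| exact Hxi].
    intros zeta Hz Hznu Hzs; apply NNPP; intros Hge.
    apply Hnone; exists zeta; repeat split; assumption. }
  destruct Hex as [zeta [Hz Hesc]].
  destruct (onlt_minimal z0 lt_wf escapes zeta Hz Hesc)
    as [m (Hm & (Hmnu & Hms & Hmge) & Hmin)].
  exists m; repeat split; try assumption.
  assert (Hle : ~ lt xi (Th m)).
  { apply (Theta_least Hm HXxi Hms).
    intros y Hy Hym Hys; apply NNPP; intros Hge.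
    apply (Hmin y Hy Hym); repeat split; try assumption.
    exact (onlt_trans lt lt_trans _ _ _ Hym Hmnu). }
  destruct (lt_total xi (Th m)) as [? | [? | ?]]; tauto.
Qed.

End Theta.

Theorem lemma3p3 (W : Type) (lt : W -> W -> Prop) (z0 o1 : W)
  (HW : is_first_uncountable lt) (Hz0 : is_zeroW lt z0) (Ho1 : is_oneW lt z0 o1)
  (X : W -> Prop) (HX : clubW lt X) (H0X : ~ X z0)
  (Th : ON W -> W) (HTh : Theta_spec lt z0 X Th)
  (n : nat) (xi : W) :
  X xi -> lt xi (Th (Omega_n o1 n)) ->
  exists zeta : ON W, onvalid lt z0 zeta /\ onlt lt zeta (Omega_n o1 n) /\
    xi = Th zeta.
Proof.
  intros HXxi Hxi.
  destruct HW as (_ & Htrans & Htotal & Hwf & _ & _).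
  assert (Hz0xi : lt z0 xi).
  { destruct (Htotal z0 xi) as [? | [<- | Hlt]];
      [assumption | contradiction | destruct (Hz0 _ Hlt)]. }
  destruct (proj2 Ho1 xi Hz0xi) as [-> | Ho1xi].
  - exists (ONZ W); repeat split.
    + exact (ONZ_lt_Omega_n lt o1 n).
    + symmetry; exact (Theta_ONZ HTh Ho1 HXxi).
  - apply (Theta_surj_below HTh Htrans Htotal Hwf);
      [apply onvalid_Omega_n, Ho1 | assumption | | assumption].
    rewrite (star_Omega_n o1 Hz0 (proj1 Ho1)); exact Ho1xi.
Qed.
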